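(* Let $f\in\mathbb{C}[h]$, $n\in\mathbb{N}$ and $\dot z\in\mathbb{C}$ with $\dot z+f^{(n)}(-\dot z)=0$. (1) The formulas $yt^i=(\dot z+f^{(i)}(-\dot z))t^{i-1}$, $ht^i=f^{(i)}(-\dot z)t^i$, $xt^i=t^{i+1}$ for $i=0,1,\dots,n-1$ define an $\mathcal{H}(f)$-module structure $C_{\mathcal{H}(f)}(\dot z,n)$ on $\mathbb{C}[t]/(t^n)$ (with basis the classes of $1,t,\dots,t^{n-1}$; here $t^{-1}:=0$ and $t^n=0$). (2) $C_{\mathcal{H}(f)}(\dot z,n)$ is a simple $\mathcal{H}(f)$-module if and only if $\dot z+f^{(i)}(-\dot z)\neq 0$ for all $i=1,2,\dots,n-1$.
   Context: For $f(h)\in\mathbb{C}[h]$, $\mathcal{H}(f)$ is the unital associative $\mathbb{C}$-algebra generated by $x,y,h$ with relations $hx=xf(h)$, $yh=f(h)y$, $yx-xy=f(h)-h$. Iterates: $f^{(0)}(h)=h$, $f^{(1)}=f$, $f^{(i+1)}(h)=f(f^{(i)}(h))$. $\mathbb{N}$ denotes the positive integers. *)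

From HB Require Import structures.
From mathcomp Require Import all_boot all_order all_algebra.
Set Implicit Arguments. Unset Strict Implicit. Unset Printing Implicit Defensive.
Import Order.TTheory GRing.Theory Num.Theory.
Local Open Scope ring_scope.

Section HfDefs.
Variable F : fieldType.

Definition fiter (f : {poly F}) (i : nat) : {poly F} := iter i (fun g => f \Po g) 'X.

Definition mxeval (n : nat) (p : {poly F}) (A : 'M[F]_n) : 'M[F]_n :=
  \sum_(i < size p) p`_i *: A ^+ i.

(* Convention: an element a of H(f) acts on row vectors v in F^n by
   v |-> v *m M(a).  Hence M(a b) = M(b) *m M(a).  A triple (X, Y, H) of
   matrices defines an H(f)-module structure on F^n (x, y, h acting by
   X, Y, H) iff the defining relations of H(f) hold:
     hx = x f(h),  yh = f(h) y,  yx - xy = f(h) - h. *)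
Definition Hf_module (f : {poly F}) (n : nat) (X Y H : 'M[F]_n) : Prop :=
  [/\ X *m H = mxeval f H *m X,
      H *m Y = Y *m mxeval f H
    & X *m Y - Y *m X = mxeval f H - H].

Definition Hf_simple (n : nat) (X Y H : 'M[F]_n) : Prop :=
  (0 < n)%N /\
  forall U : 'M[F]_n, stablemx U X -> stablemx U Y -> stablemx U H ->
    (U == 0) || row_full U.

(* The module C(z, n) on F[t]/(t^n), basis t^0..t^(n-1) = 'e_0..'e_(n-1):
   x t^i = t^(i+1)  (t^n = 0),
   y t^i = (z + f^(i)(-z)) t^(i-1)  (t^(-1) = 0),
   h t^i = f^(i)(-z) t^i. *)
Definition Cx (n : nat) : 'M[F]_n :=
  \matrix_(i < n, j < n) ((j : nat) == i.+1)%:R.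
Definition Cy (f : {poly F}) (z : F) (n : nat) : 'M[F]_n :=
  \matrix_(i < n, j < n) (if (j.+1 == i)%N then z + (fiter f i).[- z] else 0).
Definition Ch (f : {poly F}) (z : F) (n : nat) : 'M[F]_n :=
  \matrix_(i < n, j < n) (if i == j then (fiter f i).[- z] else 0).

End HfDefs.

From HB Require Import structures.
From mathcomp Require Import all_boot all_order all_algebra.
Import Order.TTheory GRing.Theory Num.Theory.
Local Open Scope ring_scope.
Set Implicit Arguments. Unset Strict Implicit.

(* In the basis [t^i] the generator [x] raises the degree, [h] is diagonal and
   [y] lowers the degree with coefficients [z + f^(i)(-z)], so each defining
   relation reduces to an identity between consecutive coefficients; at the top
   degree, where [x t^(n-1) = 0], this identity is [z + f^(n)(-z) = 0].  If the
   coefficient of [y t^i] vanishes for some [0 < i < n], the span of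
   [t^i, ..., t^(n-1)] is a proper submodule.  Otherwise applying [y] to a
   nonzero vector of a submodule lowers its top coordinate until [t^0] is
   reached, and [x] then generates the whole module from [t^0]. *)

Section StandardRows.
Variables (R : pzRingType) (n : nat).

(* Indexed by [nat] rather than ['I_n]: [erow i] is [0] once [i >= n], which
   encodes the conventions [t^n = 0] and [t^(-1) = 0] of the module. *)
Definition erow (i : nat) : 'rV[R]_n := \row_j ((j : nat) == i)%:R.

Lemma erow_ge i : (n <= i)%N -> erow i = 0.
Proof.
move=> ni; apply/rowP => j; rewrite !mxE.
by rewrite (ltn_eqF (leq_trans (ltn_ord j) ni)).
Qed.

Lemma erow_ord (k : 'I_n) : erow k = delta_mx 0 k.
Proof. by apply/rowP => j; rewrite !mxE eqxx. Qed.

Lemma erow_mul_ord m (k : 'I_n) (A : 'M[R]_(n, m)) : erow k *m A = row k A.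
Proof. by rewrite erow_ord -rowE. Qed.

Lemma mx_eq_erow m (A B : 'M[R]_(n, m)) :
  (forall k : 'I_n, erow k *m A = erow k *m B) -> A = B.
Proof. by move=> eqAB; apply/row_matrixP => k; rewrite -!erow_mul_ord. Qed.

End StandardRows.

Section RowSubspaces.
Variables (F : fieldType) (n : nat).

Lemma submx_col_eq0 m (U : 'M[F]_(m, n)) (v : 'rV[F]_n) (j : 'I_n) :
  (forall k, U k j = 0) -> (v <= U)%MS -> v 0 j = 0.
Proof.
move=> Uj0 /submxP[D ->]; rewrite mxE big1 // => k _.
by rewrite Uj0 mulr0.
Qed.

Lemma erow_sub_row_full m (U : 'M[F]_(m, n)) :
  (forall k : 'I_n, (erow F n k <= U)%MS) -> row_full U.
Proof. by move=> eU; rewrite -sub1mx; apply/row_subP => k; rewrite row1 -erow_ord. Qed.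

Definition tailmx (i : nat) : 'M[F]_n :=
  \matrix_(k < n) (if (i <= k)%N then erow F n k else 0).

Lemma erow_sub_tailmx i k : (i <= k)%N -> (erow F n k <= tailmx i)%MS.
Proof.
move=> ik; have [kn | nk] := ltnP k n; last by rewrite erow_ge ?sub0mx.
suff -> : erow F n k = row (Ordinal kn) (tailmx i) by exact: row_sub.
by rewrite rowK /= ik.
Qed.

Lemma stablemx_tailmx i (A : 'M[F]_n) :
  (forall k, (i <= k)%N -> (erow F n k *m A <= tailmx i)%MS) ->
  stablemx (tailmx i) A.
Proof.
move=> stabA; apply/row_subP => k; rewrite row_mul rowK.
by case: ifP => [/stabA // | _]; rewrite mul0mx sub0mx.
Qed.

Lemma tailmx_neq0 i : (i < n)%N -> tailmx i != 0.
Proof.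
move=> lt_in; apply/eqP => /matrixP/(_ (Ordinal lt_in) (Ordinal lt_in)).
by rewrite !mxE /= leqnn mxE eqxx => /eqP; rewrite oner_eq0.
Qed.

Lemma tailmx_not_full i : (0 < i < n)%N -> ~~ row_full (tailmx i).
Proof.
case/andP=> i_gt0 lt_in; pose j0 := Ordinal (leq_ltn_trans (leq0n i) lt_in).
apply/negP => /(submx_full (erow F n 0)) e0_tail.
have col0 k : tailmx i k j0 = 0.
  rewrite !mxE; case: ifP => [ik | _]; rewrite mxE //.
  by case: (k : nat) ik => // ile0; rewrite leqNgt i_gt0 in ile0.
by move: (submx_col_eq0 col0 e0_tail); rewrite mxE eqxx => /eqP; rewrite oner_eq0.
Qed.

Lemma mulmx_mxeval_eigen (v : 'rV[F]_n) (A : 'M[F]_n) (l : F) (p : {poly F}) :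
  v *m A = l *: v -> v *m mxeval p A = p.[l] *: v.
Proof.
move=> vA; have vAk k : v *m A ^+ k = l ^+ k *: v.
  elim: k => [|k IHk]; first by rewrite !expr0 mulmx1 scale1r.
  by rewrite exprSr mulmxA IHk -scalemxAl vA scalerA -exprSr.
rewrite /mxeval mulmx_sumr horner_coef scaler_suml.
by apply: eq_bigr => k _; rewrite -scalemxAr vAk scalerA.
Qed.

End RowSubspaces.

Section Module.
Variables (F : fieldType) (f : {poly F}) (z : F).

Definition hcoef (i : nat) : F := (fiter f i).[- z].
Definition ycoef (i : nat) : F := z + hcoef i.

Lemma hcoef0 : hcoef 0 = - z.
Proof. by rewrite /hcoef /fiter /= hornerX. Qed.

Lemma hcoefS i : hcoef i.+1 = f.[hcoef i].
Proof. by rewrite /hcoef /fiter iterS horner_comp. Qed.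

Variable n : nat.
Hypothesis ycoef_n : ycoef n = 0.

Lemma erow_Cx i : erow F n i *m Cx F n = erow F n i.+1.
Proof.
have [lt_in | le_ni] := ltnP i n; last by rewrite !erow_ge ?mul0mx // ltnW.
by rewrite (erow_mul_ord (Ordinal lt_in)); apply/rowP => j; rewrite !mxE.
Qed.

Lemma erow_Cy i :
  erow F n i *m Cy f z n = if i is m.+1 then ycoef i *: erow F n m else 0.
Proof.
have [lt_in | le_ni] := ltnP i n.
  rewrite (erow_mul_ord (Ordinal lt_in)); apply/rowP => j; rewrite !mxE /=.
  case: i lt_in => [|m] _; rewrite !mxE // eqSS.
  by case: eqP; rewrite ?mulr1 ?mulr0.
rewrite erow_ge ?mul0mx //; case: i le_ni => [|m] le_ni //.
have [-> | lt_nm] := eqVneq m.+1 n; first by rewrite ycoef_n scale0r.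
by rewrite erow_ge ?scaler0 // -ltnS ltn_neqAle eq_sym lt_nm.
Qed.

Lemma erow_Ch i : erow F n i *m Ch f z n = hcoef i *: erow F n i.
Proof.
have [lt_in | le_ni] := ltnP i n; last by rewrite erow_ge ?mul0mx ?scaler0.
rewrite (erow_mul_ord (Ordinal lt_in)); apply/rowP => j.
rewrite !mxE -(inj_eq val_inj) /=.
by have [-> | _] := eqVneq i j; rewrite ?mulr1 ?mulr0.
Qed.

Lemma erow_fCh i : erow F n i *m mxeval f (Ch f z n) = hcoef i.+1 *: erow F n i.
Proof. by rewrite hcoefS; apply/mulmx_mxeval_eigen/erow_Ch. Qed.

Lemma C_Hf_module : Hf_module f (Cx F n) (Cy f z n) (Ch f z n).
Proof.
split; apply: mx_eq_erow => k.
- by rewrite !mulmxA erow_Cx erow_Ch erow_fCh -scalemxAl erow_Cx.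
- rewrite !mulmxA erow_Ch -scalemxAl erow_Cy; case: (k : nat) => [|m].
    by rewrite scaler0 mul0mx.
  by rewrite -scalemxAl erow_fCh !scalerA mulrC.
- rewrite !mulmxBr !mulmxA erow_Cx !erow_Cy erow_fCh erow_Ch -scalerBl /ycoef.
  case: (k : nat) => [|m]; first by rewrite mul0mx subr0 hcoef0 opprK addrC.
  by rewrite -scalemxAl erow_Cx -scalerBl opprD addrACA subrr add0r.
Qed.

(* A vanishing coefficient [y t^i = 0] cuts the chain [t^i -> t^(i-1)]: the
   span of [t^i, ..., t^(n-1)] is then a proper nonzero submodule. *)
Lemma C_simple_ycoef_neq0 :
  Hf_simple (Cx F n) (Cy f z n) (Ch f z n) ->
  forall i, (0 < i < n)%N -> ycoef i != 0.
Proof.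
move=> [_ simpleC] i /andP[i_gt0 lt_in]; apply/eqP => yi0.
have sX : stablemx (tailmx F n i) (Cx F n).
  by apply: stablemx_tailmx => k ik; rewrite erow_Cx erow_sub_tailmx // ltnW.
have sH : stablemx (tailmx F n i) (Ch f z n).
  by apply: stablemx_tailmx => k ik; rewrite erow_Ch scalemx_sub ?erow_sub_tailmx.
have sY : stablemx (tailmx F n i) (Cy f z n).
  apply: stablemx_tailmx => -[|m] im; rewrite erow_Cy ?sub0mx //.
  have [-> | ne_mi] := eqVneq m.+1 i; first by rewrite yi0 scale0r sub0mx.
  by rewrite scalemx_sub ?erow_sub_tailmx // -ltnS ltn_neqAle eq_sym ne_mi.
case/orP: (simpleC _ sX sY sH); first by rewrite (negbTE (tailmx_neq0 F lt_in)).
by rewrite (negbTE (tailmx_not_full F _)) // i_gt0.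
Qed.

End Module.

Section Simplicity.
Variables (F : fieldType) (f : {poly F}) (z : F) (n' : nat).
Local Notation n := n'.+1.
Hypothesis ycoef_neq0 : forall i, (0 < i < n)%N -> ycoef f z i != 0.

Lemma mulmx_Cy_entry (v : 'rV[F]_n) (l : 'I_n) :
  (v *m Cy f z n) 0 l =
    if (l.+1 < n)%N then v 0 (inord l.+1) * ycoef f z l.+1 else 0.
Proof.
rewrite mxE; have [lt_ln | le_nl] := ltnP l.+1 n.
  rewrite (bigD1 (inord l.+1)) //= big1 ?addr0.
    by rewrite mxE inordK // eqxx.
  move=> k ne_k; rewrite mxE; case: eqP => [ek | _]; last by rewrite mulr0.
  by case/eqP: ne_k; apply: val_inj; rewrite /= inordK -?ek.
rewrite big1 // => k _; rewrite mxE; case: eqP => [ek | _]; last by rewrite mulr0.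
by move: (ltn_ord k); rewrite -ek ltnNge le_nl.
Qed.

(* Applying [y] to a nonzero vector lowers its top nonzero coordinate by one,
   since all the coefficients [ycoef i], [0 < i < n], are invertible. *)
Lemma erow0_sub_of_Cy_stable (U : 'M[F]_n) :
  stablemx U (Cy f z n) ->
  forall m (v : 'rV[F]_n), (v <= U)%MS -> v != 0 ->
    (forall j : 'I_n, (m < j)%N -> v 0 j = 0) -> (erow F n 0 <= U)%MS.
Proof.
move=> sY; elim=> [|m IHm] v vU v_neq0 v_top.
  have v_erow0 : v = v 0 0 *: erow F n 0.
    apply/rowP => j; rewrite !mxE; case: (posnP j) => [j0 | j_gt0].
      by rewrite mulr1; congr (v 0 _); apply: val_inj.
    by rewrite v_top // mulr0.
  have v00 : v 0 0 != 0.
    by apply: contra_neq v_neq0 => v00_0; rewrite [LHS]v_erow0 v00_0 scale0r.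
  by rewrite -[erow _ _ _](scalerK v00) -v_erow0 scalemx_sub.
have [top_neq0 | top_eq0] := boolP ((m.+1 < n)%N && (v 0 (inord m.+1) != 0)).
  case/andP: top_neq0 => lt_mn vm_neq0.
  apply: (IHm (v *m Cy f z n)).
  - exact: submx_trans (submxMr _ vU) sY.
  - apply/eqP => /rowP/(_ (inord m))/eqP.
    rewrite mulmx_Cy_entry mxE inordK ?(ltnW lt_mn) // lt_mn mulf_eq0.
    by rewrite (negbTE vm_neq0) (negbTE (ycoef_neq0 _)) // lt_mn.
  - move=> j lt_mj; rewrite mulmx_Cy_entry; case: ifP => // lt_jn.
    by rewrite v_top ?mul0r // inordK.
apply: (IHm v) => // j lt_mj; have [ej | ne_j] := eqVneq (j : nat) m.+1.
  by move: top_eq0; rewrite -ej ltn_ord inord_val negbK => /eqP.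
by apply: v_top; rewrite ltn_neqAle eq_sym ne_j.
Qed.

Lemma C_simple_of_ycoef_neq0 : Hf_simple (Cx F n) (Cy f z n) (Ch f z n).
Proof.
split=> // U sX sY _; have [-> // | U_neq0] := eqVneq U 0; rewrite orFb.
have [k rowk_neq0] : exists k, row k U != 0.
  apply/existsP; apply: contra_neqT U_neq0; rewrite negb_exists => /forallP rows0.
  by apply/row_matrixP => k; rewrite row0; apply/eqP; rewrite -[_ == _]negbK rows0.
have e0U : (erow F n 0 <= U)%MS.
  apply: (erow0_sub_of_Cy_stable sY (m := n') (row_sub k U) rowk_neq0) => j.
  by rewrite ltnNge -ltnS ltn_ord.
have eU i : (erow F n i <= U)%MS.
  elim: i => [|i IHi] //; rewrite -erow_Cx.
  exact: submx_trans (submxMr _ IHi) sX.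
exact: erow_sub_row_full.
Qed.

End Simplicity.

Theorem lemma11 (F : fieldType) (f : {poly F}) (n : nat) (z : F)
    (hn : (0 < n)%N) (hz : z + (fiter f n).[- z] = 0) :
  Hf_module f (Cx F n) (Cy f z n) (Ch f z n) /\
  (Hf_simple (Cx F n) (Cy f z n) (Ch f z n) <->
     forall i : nat, (0 < i < n)%N -> z + (fiter f i).[- z] != 0).
Proof.
split; first exact: C_Hf_module.
split; first exact: C_simple_ycoef_neq0.
by case: n hn hz => // n' _ _; apply: C_simple_of_ycoef_neq0.
Qed.
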